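(* Let $\Omega\subset\mathbb{R}^n$ be a domain, $x,y\in\Omega$, and $\gamma\subset\Omega$ a rectifiable curve joining $x$ to $y$. Suppose that for some $\alpha\in(0,1)$ and $C\ge1$, $$\int_\gamma\operatorname{dist}(z,\partial\Omega)^{\alpha-1}ds(z)\le C\,\operatorname{length}(\gamma)^\alpha.$$ Then (i) there exists $\bar z\in\gamma$ with $\operatorname{length}(\gamma)\le C^{\frac1{1-\alpha}}\operatorname{dist}(\bar z,\partial\Omega)$; and (ii) $$\frac1{\operatorname{length}(\gamma)}\int_\gamma\operatorname{dist}(z,\partial\Omega)^{\alpha-1}ds(z)\le 2C\inf_{z\in\gamma}\operatorname{dist}(z,\partial\Omega)^{\alpha-1}.$$
   Context: $ds$ denotes arc length measure; distances are Euclidean. *)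

From HB Require Import structures.
From mathcomp Require Import all_boot all_order all_algebra.
From mathcomp Require Import all_classical all_reals all_analysis.
Set Implicit Arguments. Unset Strict Implicit. Unset Printing Implicit Defensive.
Import Order.TTheory GRing.Theory Num.Theory.
Import numFieldNormedType.Exports.
Local Open Scope classical_set_scope.
Local Open Scope ring_scope.

Section defs.
Context {R : realType} {n : nat}.
Notation V := 'rV[R]_n.

(* Euclidean distance in R^n (the library norm on 'rV is the sup norm). *)
Definition edist (u v : V) : R := Num.sqrt (\sum_(i < n) (u ord0 i - v ord0 i) ^+ 2).

(* Polygonal length of curve g : R -> R^n along a partition s of [a,b]
   (points a < s_1 < ... < s_k = b). *)
Definition cvariation (g : R -> V) (a b : R) (s : seq R) : R :=
  \sum_(0 <= k < size s) edist (g (nth b (a :: s) k.+1)) (g (nth b (a :: s) k)).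

Definition cvariations (g : R -> V) (a b : R) : set R :=
  [set cvariation g a b s | s in [set s | itv_partition a b s]].

Definition curve_length (g : R -> V) (a b : R) : R := sup (cvariations g a b).

Definition rectifiable (g : R -> V) (a b : R) : Prop := has_ubound (cvariations g a b).

(* normal (arc-length) representation g0 : [0, length] -> R^n, g0 (s_g t) = g t *)
Definition normal_rep (g : R -> V) (a b : R) (s : R) : V :=
  g (xget a [set t | a <= t <= b /\ curve_length g a t = s]).

Definition param_interval (g : R -> V) (a b : R) : set R :=
  `[0, curve_length g a b].

Definition line_integral (g : R -> V) (a b : R) (f : V -> R) : \bar R :=
  (\int[lebesgue_measure]_(s in param_interval g a b) (f (normal_rep g a b s))%:E)%E.

Definition boundary (O : set V) : set V := closure O `\` interior O.

Definition dist_bd (O : set V) (z : V) : R := inf [set edist z w | w in boundary O].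

Definition domain (O : set V) : Prop := [/\ open O, connected O & O !=set0].

End defs.

From Pilot Require Import Defs.
From HB Require Import structures.
From mathcomp Require Import all_boot all_order all_algebra.
From mathcomp Require Import all_classical all_reals all_analysis.
From mathcomp Require Import ring lra.
Import Order.TTheory GRing.Theory Num.Theory.
Import numFieldNormedType.Exports.
Local Open Scope classical_set_scope.
Local Open Scope ring_scope.
Set Implicit Arguments.
Unset Strict Implicit.

(* Unqualified, [edist] is the extended distance of mathcomp-analysis. *)
Local Notation edist := Defs.edist.

(** Write [d z] for the distance from [z] to the boundary and [L] for the
length of the curve.  Since [d] is continuous and positive on the compact
curve, it attains a maximum [d zb]; then [d zb ^ (alpha - 1) * L] is at most
the integral, hence at most [C * L ^ alpha], and solving for [L] gives (i).
For (ii) fix [z0] on the curve and put [d0 := d z0].  If [d0 <= 2 L] the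
hypothesis bounds the average by [C * L ^ (alpha - 1) <= 2 C d0 ^ (alpha - 1)].
Otherwise [d] is [1]-Lipschitz and every point of the curve lies within [L] of
[z0], so [d >= d0 - L > d0 / 2] along the curve and the integrand is at most
[(d0 / 2) ^ (alpha - 1) <= 2 d0 ^ (alpha - 1)].  Both cases rest on the
inequality [v ^ r <= 2 u ^ r] for [u <= 2 v] and [-1 <= r <= 0]. *)

Lemma cauchy_schwarz_sum (R : realFieldType) (I : finType) (a b : I -> R) :
  (\sum_i a i * b i) ^+ 2 <= (\sum_i a i ^+ 2) * (\sum_i b i ^+ 2).
Proof.
set A := \sum_i a i ^+ 2; set B := \sum_i b i ^+ 2; set P := \sum_i a i * b i.
have A0 : 0 <= A by apply: sumr_ge0 => i _; exact: sqr_ge0.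
have B0 : 0 <= B by apply: sumr_ge0 => i _; exact: sqr_ge0.
have quadratic_ge0 t : 0 <= t ^+ 2 * A + 2 * t * P + B.
  have -> : t ^+ 2 * A + 2 * t * P + B = \sum_i (t * a i + b i) ^+ 2.
    rewrite /A /P /B !mulr_sumr -!big_split /=.
    by apply: eq_bigr => i _; rewrite sqrrD exprMn; ring.
  by apply: sumr_ge0 => i _; exact: sqr_ge0.
have [A_eq0|A_neq0] := eqVneq A 0.
  have a0 i : a i = 0.
    apply/eqP; rewrite -sqrf_eq0 eq_le sqr_ge0 andbT -A_eq0 /A (bigD1 i) //=.
    by rewrite lerDl; apply: sumr_ge0 => j _; exact: sqr_ge0.
  have -> : P = 0 by rewrite /P big1 // => i _; rewrite a0 mul0r.
  by rewrite expr0n /= mulr_ge0.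
have A_gt0 : 0 < A by rewrite lt_def A_neq0 A0.
have := quadratic_ge0 (- P / A).
have -> : (- P / A) ^+ 2 * A + 2 * (- P / A) * P + B = B - P ^+ 2 / A.
  by field.
by rewrite subr_ge0 ler_pdivrMr // mulrC.
Qed.

Section euclidean_distance.
Variables (R : realType) (n : nat).
Implicit Types u v w : 'rV[R]_n.

Lemma edist_ge0 u v : 0 <= edist u v.
Proof. exact: sqrtr_ge0. Qed.

Lemma edistxx u : edist u u = 0.
Proof. by rewrite /edist big1 ?sqrtr0 // => i _; rewrite subrr expr0n. Qed.

Lemma edistC u v : edist u v = edist v u.
Proof.
by rewrite /edist; congr Num.sqrt; apply: eq_bigr => i _; rewrite -sqrrN opprB.
Qed.

Lemma edist_triangle u v w : edist u w <= edist u v + edist v w.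
Proof.
rewrite /edist.
set a := fun i : 'I_n => u ord0 i - v ord0 i.
set b := fun i : 'I_n => v ord0 i - w ord0 i.
set A := \sum_i a i ^+ 2; set B := \sum_i b i ^+ 2.
have A0 : 0 <= A by apply: sumr_ge0 => i _; exact: sqr_ge0.
have B0 : 0 <= B by apply: sumr_ge0 => i _; exact: sqr_ge0.
have -> : \sum_(i < n) (u ord0 i - w ord0 i) ^+ 2
          = A + 2 * (\sum_i a i * b i) + B.
  rewrite /A /B mulr_sumr -!big_split /=.
  by apply: eq_bigr => i _; rewrite /a /b sqrrD; ring.
have ab_le : \sum_i a i * b i <= Num.sqrt A * Num.sqrt B.
  rewrite -sqrtrM // (le_trans (ler_norm _)) // -sqrtr_sqr ler_wsqrtr //.
  exact: cauchy_schwarz_sum.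
rewrite -[leRHS]ger0_norm ?addr_ge0 ?sqrtr_ge0 // -sqrtr_sqr ler_wsqrtr //.
by rewrite sqrrD !sqr_sqrtr //; lra.
Qed.

Lemma edist_coord u v i : `|u ord0 i - v ord0 i| <= edist u v.
Proof.
rewrite /edist -sqrtr_sqr ler_wsqrtr // (bigD1 i) //= lerDl.
by apply: sumr_ge0 => j _; exact: sqr_ge0.
Qed.

Lemma norm_le_edist u v : `|u - v| <= edist u v.
Proof.
have [->|uv_neq0] := eqVneq `|u - v| 0; first exact: edist_ge0.
have [[i j] /= normE] := mx_norm_neq0 uv_neq0.
rewrite -[leLHS]/(mx_norm (u - v)) normE (ord1 i) !mxE; exact: edist_coord.
Qed.

Lemma mx_norm_coord u i : `|u ord0 i| <= `|u|.
Proof.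
rewrite [leRHS]/Num.norm /= mx_normrE; apply/bigmax_geP; right => /=.
by exists (ord0, i).
Qed.

(* The library norm on row vectors is the sup norm, hence the factor. *)
Lemma edist_le_norm u v : edist u v <= n.+1%:R * `|u - v|.
Proof.
rewrite /edist -[leRHS]ger0_norm ?mulr_ge0 // -sqrtr_sqr ler_wsqrtr // exprMn.
apply: (@le_trans _ _ (\sum_(i < n) `|u - v| ^+ 2)).
  apply: ler_sum => i _; rewrite -real_normK ?num_real // lerXn2r ?nnegrE //.
  by apply: le_trans (mx_norm_coord (u - v) i); rewrite !mxE.
rewrite sumr_const card_ord -[_ *+ n]mulr_natl ler_wpM2r ?sqr_ge0 // -natrX ler_nat.
by rewrite expnS (leq_trans (leqnSn n)) // leq_pmulr.
Qed.

End euclidean_distance.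

Section distance_to_boundary.
Variables (R : realType) (n : nat) (O : set 'rV[R]_n).
Implicit Types z w : 'rV[R]_n.

Lemma dist_bd_ge0 z : 0 <= dist_bd O z.
Proof.
rewrite /dist_bd; set S := [set _ | _ in _].
have [->|S_neq0] := eqVneq S set0; first by rewrite inf0.
apply: lb_le_inf; first exact/set0P.
by move=> _ [w _ <-]; exact: edist_ge0.
Qed.

Lemma dist_bd_le_edist z w : boundary O w -> dist_bd O z <= edist z w.
Proof.
move=> bdw; apply: ge_inf; last by exists w.
by exists 0 => _ [u _ <-]; exact: edist_ge0.
Qed.

Hypothesis bdO_neq0 : boundary O !=set0.

Lemma dist_bd_lipschitz z y : dist_bd O z <= dist_bd O y + edist z y.
Proof.
have [w0 bdw0] := bdO_neq0.
rewrite -lerBlDr; apply: lb_le_inf; first by exists (edist y w0), w0.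
move=> _ [w bdw <-]; rewrite lerBlDr addrC.
exact: le_trans (dist_bd_le_edist z bdw) (edist_triangle z y w).
Qed.

Lemma continuous_dist_bd : continuous (dist_bd O).
Proof.
move=> z; apply/(@cvgrPdist_lt _ _ _ (nbhs z) (nbhs_filter z)) => e e_gt0.
near=> y.
apply: (@le_lt_trans _ _ (edist z y)).
  rewrite ler_norml; apply/andP; split.
    by have := dist_bd_lipschitz y z; rewrite edistC; lra.
  by have := dist_bd_lipschitz z y; lra.
apply: le_lt_trans (edist_le_norm z y) _.
rewrite mulrC -ltr_pdivlMr //.
near: y; apply/nbhs_ballP; exists (e / n.+1%:R); first by rewrite /= divr_gt0.
by move=> y; rewrite -ball_normE.
Unshelve. all: by end_near.
Qed.

(* An open set is its own interior, so it does not meet its boundary. *)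
Lemma dist_bd_gt0 z : open O -> O z -> 0 < dist_bd O z.
Proof.
move=> Oo Oz; have [w0 bdw0] := bdO_neq0.
have /nbhs_ballP[e e_gt0 ballO] : nbhs z O by move: Oo; rewrite openE; apply.
apply: (lt_le_trans e_gt0); apply: lb_le_inf; first by exists (edist z w0), w0.
move=> _ [w [_ w_nint] <-].
have nOw : ~ O w by move=> Ow; apply: w_nint; move: Oo; rewrite openE; apply.
apply: le_trans (norm_le_edist z w); rewrite leNgt; apply/negP => zw_lt.
by apply: nOw; apply: ballO; rewrite -ball_normE.
Qed.

End distance_to_boundary.

(* Without boundary points [O] would be clopen, and then a segment from a
point of [O] to a point outside would be disconnected. *)
Lemma boundary_neq0 (R : realType) (n : nat) (O : set 'rV[R]_n) :
  O !=set0 -> O <> setT -> boundary O !=set0.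
Proof.
move=> [p Op] OT; apply: contrapT => bd0.
have clO_int : closure O `<=` interior O.
  by move=> w clw; apply: contrapT => nint; apply: bd0; exists w.
have Oo : open O by rewrite openE => w Ow; exact/clO_int/subset_closure.
have Oc : closed O by move=> w clw; apply: interior_subset; exact: clO_int.
have [q nOq] : exists q, ~ O q.
  apply: contrapT => nq; apply: OT; apply/seteqP; split => // w _.
  by apply: contrapT => nOw; apply: nq; exists w.
pose h (t : R) : 'rV[R]_n := p + t *: (q - p).
have hc : {within `[0, 1], continuous h}.
  apply: continuous_subspaceT => t; apply: cvgD; first exact: cvg_cst.
  by apply: cvgZr_tmp; exact: cvg_id.
have in01 : `[0, 1]%classic (0 : R) /\ `[0, 1]%classic (1 : R).
  by split; rewrite /= in_itv /= lexx ler01.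
have segO : h @` `[0, 1] `&` O = h @` `[0, 1].
  apply: (connected_continuous_connected (@segment_connected R 0 1) hc).
  - by exists p; split => //; exists 0; [exact: in01.1 | rewrite /h scale0r addr0].
  - by exists O.
  - by exists O.
have : (h @` `[0, 1]) q by exists 1; [exact: in01.2 | rewrite /h scale1r addrC subrK].
by rewrite -segO => -[].
Qed.

Section curve_length.
Variables (R : realType) (n : nat) (g : R -> 'rV[R]_n) (a b : R).
Hypothesis rect_g : rectifiable g a b.

Lemma cvariation_le_curve_length s :
  itv_partition a b s -> cvariation g a b s <= curve_length g a b.
Proof. by move=> s_part; apply: (ub_le_sup rect_g); exists s. Qed.

Lemma curve_length_ge0 : a <= b -> 0 <= curve_length g a b.
Proof.
rewrite le_eqVlt => /predU1P[ab|ab].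
  apply: le_trans (cvariation_le_curve_length (s := [::]) _).
    by rewrite /cvariation big_geq.
  by split; rewrite //= ab.
apply: le_trans (cvariation_le_curve_length (s := [:: b]) _); last first.
  by split; rewrite /= ?ab ?eqxx.
by rewrite /cvariation unlock /= addr0 edist_ge0.
Qed.

(* A chord is bounded by the polygonal length along [a, t1, t2, b], where
repeated points must be dropped to keep the partition strictly increasing. *)
Lemma edist_le_curve_length t1 t2 : a <= t1 <= b -> a <= t2 <= b ->
  edist (g t1) (g t2) <= curve_length g a b.
Proof.
wlog t12 : t1 t2 / t1 <= t2.
  move=> le_len t1ab t2ab; have [t12|/ltW t21] := leP t1 t2; first exact: le_len.
  by rewrite edistC; exact: le_len.
move=> /andP[at1 t1b] /andP[at2 t2b].
move: t12; rewrite le_eqVlt => /predU1P[<-|t12].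
  by rewrite edistxx curve_length_ge0 // (le_trans at1).
have edist_le_cvar s : itv_partition a b s ->
    edist (g t1) (g t2) <= cvariation g a b s ->
    edist (g t1) (g t2) <= curve_length g a b.
  by move=> s_part /le_trans; apply; exact: cvariation_le_curve_length.
have e1 := edist_ge0 (g t1) (g a); have e2 := edist_ge0 (g b) (g t2).
move: at1 t2b; rewrite le_eqVlt => /predU1P[a1|at1]; rewrite le_eqVlt => /predU1P[t2E|t2b].
- apply: (edist_le_cvar [:: b]); first by split; rewrite //= ?a1 -?t2E ?t12.
  by rewrite /cvariation unlock /= addr0 edistC a1 t2E.
- apply: (edist_le_cvar [:: t2; b]); first by split; rewrite //= ?a1 ?t12 ?t2b.
  by rewrite /cvariation unlock /= addr0 edistC a1; lra.
- apply: (edist_le_cvar [:: t1; b]); first by split; rewrite //= ?at1 -?t2E ?t12.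
  by rewrite /cvariation unlock /= addr0 [edist (g b) _]edistC t2E; lra.
- apply: (edist_le_cvar [:: t1; t2; b]).
    by split; rewrite //= ?at1 ?t12 ?t2b.
  by rewrite /cvariation unlock /= addr0 [edist (g t2) _]edistC; lra.
Qed.

End curve_length.

(* No measurability is needed: the integrals are compared as suprema over
dominated simple functions. *)
Lemma ge0_le_integral_nonmeasurable d (T : measurableType d) (R : realType)
    (mu : {measure set T -> \bar R}) (D : set T) (f1 f2 : T -> \bar R) :
  (forall x, D x -> (0 <= f1 x)%E) -> (forall x, D x -> (f1 x <= f2 x)%E) ->
  (\int[mu]_(x in D) f1 x <= \int[mu]_(x in D) f2 x)%E.
Proof.
move=> f1_ge0 f12.
have f2_ge0 x : D x -> (0 <= f2 x)%E.
  by move=> Dx; exact: le_trans (f1_ge0 _ Dx) (f12 _ Dx).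
rewrite !ge0_integralE //.
apply: ge_ereal_sup => _ [h h_le <-]; apply: ereal_sup_ubound; exists h => //= x.
apply: le_trans (h_le x) _; rewrite /patch; case: ifP => // /[1!inE] Dx.
exact: f12.
Qed.

Lemma integral_cst_itv0 (R : realType) (l c : R) : 0 <= l ->
  (\int[lebesgue_measure]_(x in (`[0%R, l]%classic : set R)) c%:E = (c * l)%:E)%E.
Proof.
move=> l_ge0; rewrite integral_cst /=; last exact: measurable_itv.
rewrite lebesgue_measure_itv /= lte_fin.
have [l_gt0|] := ltP 0 l; first by rewrite -EFinD subr0 -EFinM.
by move=> l_le0; have -> : l = 0 by apply: le_anti; rewrite l_ge0 l_le0.
Qed.

Section line_integral.
Variables (R : realType) (n : nat) (g : R -> 'rV[R]_n) (a b : R).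
Variable f : 'rV[R]_n -> R.
Hypothesis ab : a <= b.
Local Notation curve := (g @` `[a, b]).

(* [xget] falls back to [a] outside the range of the arc length. *)
Lemma normal_rep_in_curve s : curve (normal_rep g a b s).
Proof.
rewrite /normal_rep; set P := [set t | a <= t <= b /\ _].
have [[t Pt]|nP] := pselect (exists t, P t).
  have [/andP[a_le b_ge] _] := xgetPex a (ex_intro _ t Pt).
  by exists (xget a P) => //; rewrite /= in_itv /= a_le b_ge.
rewrite xgetPN; last by move=> t Pt; apply: nP; exists t.
by exists a => //; rewrite /= in_itv /= lexx ab.
Qed.

Lemma line_integral_ge0 :
  (forall z, curve z -> 0 <= f z) -> (0 <= line_integral g a b f)%E.
Proof.
move=> f_ge0; apply: integral_ge0 => s _; rewrite lee_fin.
exact/f_ge0/normal_rep_in_curve.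
Qed.

Hypothesis rect_g : rectifiable g a b.

Lemma line_integral_ge c : 0 <= c -> (forall z, curve z -> c <= f z) ->
  ((c * curve_length g a b)%:E <= line_integral g a b f)%E.
Proof.
move=> c_ge0 c_le; rewrite /line_integral /param_interval.
rewrite -integral_cst_itv0 ?curve_length_ge0 //.
apply: ge0_le_integral_nonmeasurable => s _; rewrite lee_fin //.
exact/c_le/normal_rep_in_curve.
Qed.

Lemma line_integral_le c : (forall z, curve z -> 0 <= f z <= c) ->
  (line_integral g a b f <= (c * curve_length g a b)%:E)%E.
Proof.
move=> f_bnd; rewrite /line_integral /param_interval.
rewrite -integral_cst_itv0 ?curve_length_ge0 //.
by apply: ge0_le_integral_nonmeasurable => s _;
  rewrite lee_fin; have /andP[] := f_bnd _ (normal_rep_in_curve s).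
Qed.

End line_integral.

Lemma le0_ger_powR (R : realType) (r x y : R) :
  r <= 0 -> 0 < x -> x <= y -> y `^ r <= x `^ r.
Proof.
move=> r_le0 x_gt0 xy; have y_gt0 : 0 < y by exact: lt_le_trans xy.
have powR_opp z : z `^ r = (z `^ (- r))^-1 by rewrite -powRN opprK.
rewrite !powR_opp lef_pV2 ?posrE ?powR_gt0 //.
by apply: (ge0_ler_powR (r := - r)) => //; rewrite ?oppr_ge0 // nnegrE ltW.
Qed.

Lemma powR_le_twice (R : realType) (r u v : R) :
  -1 <= r <= 0 -> 0 < u -> u <= 2 * v -> v `^ r <= 2 * u `^ r.
Proof.
move=> /andP[r_geN1 r_le0] u_gt0 uv.
have u2_gt0 : 0 < u / 2 by rewrite divr_gt0.
have u2_le : u / 2 <= v by rewrite ler_pdivrMr // mulrC.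
apply: le_trans (le0_ger_powR r_le0 u2_gt0 u2_le) _.
rewrite powRM ?invr_ge0 ?(ltW u_gt0) // mulrC ler_wpM2r ?powR_ge0 //.
rewrite -powR_inv1 // -powRrM mulN1r.
by apply: ler1_powR; rewrite ?ler1n // lerNl.
Qed.

Lemma powR_le_mul_root (R : realType) (p C D L : R) :
  0 < p -> 0 <= C -> 0 <= D -> 0 <= L ->
  L `^ p <= C * D `^ p -> L <= C `^ p^-1 * D.
Proof.
move=> p_gt0 C_ge0 D_ge0 L_ge0 le_p.
have p_inv_ge0 : 0 <= p^-1 by rewrite invr_ge0 ltW.
have := ge0_ler_powR p_inv_ge0 (powR_ge0 L p) _ le_p.
rewrite powRM ?powR_ge0 // -!powRrM mulfV ?gt_eqF // !powRr1 //.
by apply; rewrite nnegrE mulr_ge0 ?powR_ge0.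
Qed.

Lemma powR_root_bound (R : realType) (alpha C D L : R) :
  alpha < 1 -> 0 <= C -> 0 < D -> 0 <= L ->
  D `^ (alpha - 1) * L <= C * L `^ alpha -> L <= C `^ (1 - alpha)^-1 * D.
Proof.
move=> alpha_lt1 C_ge0 D_gt0 L_ge0 le_alpha.
have p_gt0 : 0 < 1 - alpha by rewrite subr_gt0.
apply: (powR_le_mul_root p_gt0 C_ge0 (ltW D_gt0) L_ge0).
have [->|L_neq0] := eqVneq L 0; first by rewrite powR0 ?gt_eqF ?mulr_ge0 ?powR_ge0.
have L_gt0 : 0 < L by rewrite lt_def L_neq0.
set l := L `^ (1 - alpha) in le_alpha *; set d := D `^ (1 - alpha) in le_alpha *.
have l_gt0 : 0 < l by rewrite powR_gt0.
have d_gt0 : 0 < d by rewrite powR_gt0.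
have Dd : D `^ (alpha - 1) = d^-1 by rewrite -powRN opprB.
have Ll : L `^ alpha = L / l.
  rewrite /l -{2}(powRr1 L_ge0) -powRB ?L_neq0 ?implybT //.
  by congr (_ `^ _); ring.
move: le_alpha; rewrite Dd Ll => /(ler_wpM2r (ltW (mulr_gt0 d_gt0 l_gt0))).
have -> : d^-1 * L * (d * l) = L * l by field; rewrite gt_eqF.
have -> : C * (L / l) * (d * l) = L * (C * d) by field; rewrite gt_eqF.
by rewrite ler_pM2l.
Qed.

Section lemma2p2_proof.
Variables (R : realType) (n : nat) (O : set 'rV[R]_n) (g : R -> 'rV[R]_n).
Variables (a b alpha C : R).
Hypotheses (Oo : open O) (bdO_neq0 : boundary O !=set0).
Hypotheses (ab : a <= b) (rect_g : rectifiable g a b).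
Hypothesis curve_in_O : g @` `[a, b] `<=` O.
Hypotheses (alpha_gt0 : 0 < alpha) (alpha_lt1 : alpha < 1) (C_ge1 : 1 <= C).
Local Notation curve := (g @` `[a, b]).
Local Notation L := (curve_length g a b).
Local Notation I := (line_integral g a b (fun z => dist_bd O z `^ (alpha - 1))).
Hypothesis I_le : (I <= (C * L `^ alpha)%:E)%E.

Let dist_bd_curve_gt0 z : curve z -> 0 < dist_bd O z.
Proof. by move=> /curve_in_O; exact: dist_bd_gt0. Qed.

Let C_gt0 : 0 < C. Proof. exact: lt_le_trans ltr01 C_ge1. Qed.

Let exponent_range : -1 <= alpha - 1 <= 0.
Proof. by rewrite lerBrDr addNr subr_le0 (ltW alpha_gt0) (ltW alpha_lt1). Qed.

Lemma length_le_root_dist_bd : {within `[a, b], continuous g} ->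
  exists2 zb, curve zb & L <= C `^ (1 - alpha)^-1 * dist_bd O zb.
Proof.
move=> gc.
have dgc : {within `[a, b], continuous (dist_bd O \o g)}.
  by move=> t; apply: continuous_comp (gc t) _; exact: continuous_dist_bd.
have [c c_ab d_max] := EVT_max ab dgc.
have curve_gc : curve (g c) by exists c.
exists (g c) => //.
apply: powR_root_bound alpha_lt1 (ltW C_gt0) (dist_bd_curve_gt0 curve_gc) _ _.
  exact: curve_length_ge0.
rewrite -lee_fin; apply: le_trans I_le.
apply: line_integral_ge => //; first exact: powR_ge0.
move=> _ [t t_ab <-]; apply: le0_ger_powR; last exact: d_max.
  by rewrite subr_le0 ltW.
by apply: dist_bd_curve_gt0; exists t.
Qed.

Lemma average_le_twice r z0 : I = r%:E -> curve z0 ->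
  L^-1 * r <= 2 * C * dist_bd O z0 `^ (alpha - 1).
Proof.
move=> Ir [t0 t0_ab <-]; set d0 := dist_bd O (g t0).
have d0_gt0 : 0 < d0 by apply: dist_bd_curve_gt0; exists t0.
have [L0|L_neq0] := eqVneq L 0.
  by rewrite L0 invr0 mul0r !mulr_ge0 ?powR_ge0 // ltW.
have L_gt0 : 0 < L by rewrite lt_def L_neq0 curve_length_ge0.
have r_le : r <= C * L `^ alpha by move: I_le; rewrite Ir lee_fin.
have [d0_le|d0_gt] := leP d0 (2 * L).
  apply: (@le_trans _ _ (C * L `^ (alpha - 1))).
    by rewrite ler_pdivrMl // mulrCA mulr_powRB1 // ltW.
  by rewrite [2 * C]mulrC -mulrA ler_pM2l // powR_le_twice.
have far z : curve z -> d0 <= 2 * dist_bd O z.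
  move=> [t t_ab <-].
  have := dist_bd_lipschitz bdO_neq0 (g t0) (g t).
  have : edist (g t0) (g t) <= L.
    by apply: edist_le_curve_length; rewrite // -[_ <= _ <= _]in_itv.
  (* [lra] chokes on the extended-real hypotheses. *)
  clear I_le Ir r_le; lra.
have : (I <= (2 * d0 `^ (alpha - 1) * L)%:E)%E.
  apply: line_integral_le => // z curve_z.
  by rewrite powR_ge0 powR_le_twice ?far.
rewrite Ir lee_fin => r_le_far.
rewrite ler_pdivrMl //; apply: le_trans r_le_far _.
by rewrite [leLHS]mulrC ler_pM2l // mulrAC ler_peMr // mulr_ge0 ?powR_ge0.
Qed.

Lemma average_le_twice_inf :
  ((L^-1)%:E * I <= (2 * C * inf [set dist_bd O z `^ (alpha - 1) | z in curve])%:E)%E.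
Proof.
have I_ge0 : (0 <= I)%E by apply: line_integral_ge0 => // z _; exact: powR_ge0.
have [r Ir] : exists r, I = r%:E.
  by move: I_ge0 I_le; case: I => [r _ _| |] //; exists r.
rewrite Ir -EFinM lee_fin [2 * C * _]mulrC -ler_pdivrMr ?mulr_gt0 //.
apply: lb_le_inf.
  by exists (dist_bd O (g a) `^ (alpha - 1)), (g a) => //; exists a; rewrite //= in_itv /= lexx ab.
move=> _ [z curve_z <-].
rewrite ler_pdivrMr ?mulr_gt0 // [_ * (2 * C)]mulrC; exact: average_le_twice.
Qed.

End lemma2p2_proof.

Theorem lemma2p2 (R : realType) (n : nat) (O : set 'rV[R]_n) (x y : 'rV[R]_n)
    (g : R -> 'rV[R]_n) (a b alpha C : R) :
  domain O -> O <> setT ->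
  O x -> O y ->
  a <= b -> {within `[a, b], continuous g} ->
  g a = x -> g b = y -> g @` `[a, b] `<=` O ->
  rectifiable g a b ->
  0 < alpha < 1 -> 1 <= C ->
  (line_integral g a b (fun z => (dist_bd O z `^ (alpha - 1))%R)
     <= (C * curve_length g a b `^ alpha)%R%:E)%E ->
  (exists2 zb, (g @` `[a, b]) zb &
     curve_length g a b <= C `^ (1 - alpha)^-1 * dist_bd O zb)
  /\
  (((curve_length g a b)^-1)%R%:E
     * line_integral g a b (fun z => (dist_bd O z `^ (alpha - 1))%R)
   <= (2 * C * inf [set dist_bd O z `^ (alpha - 1) | z in g @` `[a, b]])%R%:E)%E.
Proof.
move=> [Oo _ O_neq0] OT _ _ ab gc _ _ curve_in_O rect_g /andP[alpha_gt0 alpha_lt1]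
  C_ge1 I_le.
have bdO_neq0 := boundary_neq0 O_neq0 OT.
split; first exact: length_le_root_dist_bd.
exact: average_le_twice_inf.
Qed.
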